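(* Let $F,F'$ be instances over the same schema such that there is no surjective homomorphism from $F$ onto $F'$. Then there exists a subinstance $H$ of $F'$ such that $\hom_{\mathbb{N}}(F,H)\neq\hom_{\mathbb{N}}(F',H)$.
   Context: An instance $A$ over a schema $\sigma$ (a finite set of relation symbols with arities) assigns to each $R\in\sigma$ a finite relation $R^A$ of the corresponding arity; $\mathrm{adom}(A)$ is the set of elements occurring in its tuples. A homomorphism $h:A\to B$ is a map $\mathrm{adom}(A)\to\mathrm{adom}(B)$ preserving every relation; it is surjective if its image is $\mathrm{adom}(B)$. $\hom_{\mathbb{N}}(A,B)$ is the number of homomorphisms $A\to B$. $A$ is a subinstance of $B$ if $R^A\subseteq R^B$ for every $R\in\sigma$. *)

From mathcomp Require Import all_boot.
Set Implicit Arguments. Unset Strict Implicit. Unset Printing Implicit Defensive.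

(* An instance assigns to each symbol R a finite relation, given as a finite
   list of [ar R]-tuples (only membership matters). *)
Definition instance (V : choiceType) (sig : finType) (ar : sig -> nat) :=
  forall R : sig, seq ((ar R).-tuple V).

Section Instances.
Variables (V : choiceType) (sig : finType) (ar : sig -> nat).

Definition adom (A : instance V ar) : seq V :=
  undup (flatten [seq flatten [seq val t | t <- A R] | R <- enum sig]).

Definition subinstance (A B : instance V ar) : Prop :=
  forall R : sig, {subset A R <= B R}.

Definition adom_map (A B : instance V ar) :=
  {ffun seq_sub (adom A) -> seq_sub (adom B)}.

(* extension of such a map to all of V (default outside adom(A) is irrelevant,
   since only elements of adom(A) are ever evaluated) *)
Definition ext_map (A B : instance V ar) (h : adom_map A B) (x : V) : V :=
  match insub x with
  | Some y => val (h y)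
  | None => x
  end.

Definition is_hom (A B : instance V ar) (h : adom_map A B) : bool :=
  [forall R : sig, all (fun t => map_tuple (ext_map h) t \in B R) (A R)].

Definition is_surj (A B : instance V ar) (h : adom_map A B) : bool :=
  [forall y : seq_sub (adom B), exists x : seq_sub (adom A), h x == y].

Definition hom_count (A B : instance V ar) : nat :=
  #|[pred h : adom_map A B | is_hom h]|.

Definition exists_surj_hom (A B : instance V ar) : Prop :=
  exists h : adom_map A B, is_hom h && is_surj h.

End Instances.

From mathcomp Require Import all_boot.
Set Implicit Arguments. Unset Strict Implicit. Unset Printing Implicit Defensive.

(* Fix the target F' and write U = adom(F').  For S ⊆ U let
   F'[S] be the subinstance of F' induced by S (the tuples of F' all of whose
   entries lie in S).  For any instance A,
     hom(A, F'[S]) = #{h : A -> F' | image h ⊆ S}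
                   = sum_{T ⊆ S} #{h : A -> F' | image h = T}.
   If hom(F, F'[S]) = hom(F', F'[S]) for every S, then by Möbius-style
   inversion over the subset lattice (induction on |S|) the numbers of
   homomorphisms with image exactly T agree for F and F', for every T.
   Taking T = U, the identity F' -> F' is surjective, so there is also a
   surjective homomorphism F -> F'.  Contrapositively, if there is none,
   some induced subinstance F'[S] separates F from F'. *)

Section SubsetInversion.
Variable T : finType.

Lemma subset_sums_inj (e1 e2 : {set T} -> nat) :
  (forall S : {set T},
     \sum_(X : {set T} | X \subset S) e1 X = \sum_(X : {set T} | X \subset S) e2 X) ->
  e1 =1 e2.
Proof.
move=> sums_eq S; elim: {S}_.+1 {-2}S (ltnSn #|S|) => // n IH S ltSn.
have split_sum e :
    \sum_(X : {set T} | X \subset S) e X = e S + \sum_(X : {set T} | X \proper S) e X.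
  rewrite (bigD1 S) //=; congr (_ + _).
  by apply: eq_bigl => X; rewrite properEneq andbC.
have proper_eq : \sum_(X : {set T} | X \proper S) e1 X = \sum_(X : {set T} | X \proper S) e2 X.
  apply: eq_bigr => X ltXS; apply: IH.
  by rewrite (leq_trans (proper_card ltXS)).
by have := sums_eq S; rewrite !split_sum proper_eq => /addIn.
Qed.

End SubsetInversion.

Section Instances.
Variables (V : choiceType) (sig : finType) (ar : sig -> nat).
Implicit Types A B : instance V ar.

Lemma mem_adom A x :
  reflect (exists R, exists2 t, t \in A R & x \in val t) (x \in adom A).
Proof.
rewrite /adom mem_undup; apply: (iffP flattenP).
  move=> [s /mapP [R _ ->] /flattenP [s' /mapP [t tA ->] xt]].
  by exists R; exists t.
move=> [R [t tA xt]].
exists (flatten [seq val t0 | t0 <- A R]); first by apply/mapP; exists R; rewrite ?mem_enum.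
by apply/flattenP; exists (val t) => //; apply/mapP; exists t.
Qed.

Lemma ext_map_in A B (h : adom_map A B) (x : seq_sub (adom A)) :
  ext_map h (val x) = val (h x).
Proof. by rewrite /ext_map valK. Qed.

Definition id_map B : adom_map B B := [ffun x => x].

Lemma id_map_hom B : is_hom (id_map B).
Proof.
apply/forallP => R; apply/allP => t tB.
suff -> : map_tuple (ext_map (id_map B)) t = t by [].
apply: val_inj; rewrite /= -[RHS]map_id; apply: eq_map => x.
by rewrite /ext_map; case: insubP => [y _ <-|] //=; rewrite ffunE.
Qed.

Lemma id_map_surj B : is_surj (id_map B).
Proof. by apply/forallP => y; apply/existsP; exists y; rewrite ffunE. Qed.

Section Induced.
Variable B : instance V ar.
Local Notation U := (seq_sub (adom B)).

Definition inS (S : {set U}) (x : V) : bool :=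
  if insub x is Some u then u \in S else false.

Lemma inS_val S (u : U) : inS S (val u) = (u \in S).
Proof. by rewrite /inS valK. Qed.

Definition induced (S : {set U}) : instance V ar :=
  fun R => [seq t <- B R | all (inS S) (val t)].

Lemma induced_sub S : subinstance (induced S) B.
Proof. by move=> R t; rewrite mem_filter => /andP []. Qed.

Lemma adom_induced S x : x \in adom (induced S) -> (x \in adom B) && inS S x.
Proof.
move/mem_adom=> [R [t]]; rewrite mem_filter => /andP [allt tB xt].
apply/andP; split; last by move/allP: allt; apply.
by apply/mem_adom; exists R; exists t.
Qed.

Definition img A (h : adom_map A B) : {set U} := [set y | [exists x, h x == y]].

Lemma img_full A (h : adom_map A B) : (img h == setT) = is_surj h.
Proof.
apply/eqP/forallP => [img_h y | surj_h]; first by have := in_setT y; rewrite -img_h inE.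
by apply/setP => y; rewrite !inE surj_h.
Qed.

Definition homs_into A (S : {set U}) : nat :=
  #|[set h : adom_map A B | is_hom h && (img h \subset S)]|.
Definition homs_onto A (S : {set U}) : nat :=
  #|[set h : adom_map A B | is_hom h && (img h == S)]|.

Lemma homs_into_sum A S : homs_into A S = \sum_(X : {set U} | X \subset S) homs_onto A X.
Proof.
rewrite /homs_into -sum1dep_card.
rewrite (partition_big (@img A) (fun X => X \subset S)); last by move=> h /andP [].
apply: eq_bigr => X XS; rewrite /homs_onto -sum1dep_card.
apply: eq_bigl => h; case: eqP => [->|]; by rewrite ?XS ?andbT ?andbF.
Qed.

Lemma all_inS A (h : adom_map A B) (S : {set U}) R t : img h \subset S -> t \in A R ->
  all (inS S) (map_tuple (ext_map h) t).
Proof.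
move=> sub tA; apply/allP => z /mapP [x xt ->].
have xA : x \in adom A by apply/mem_adom; exists R; exists t.
rewrite -[x]/(val (SeqSub xA : seq_sub (adom A))) ext_map_in inS_val.
by apply: (subsetP sub); rewrite inE; apply/existsP; exists (SeqSub xA).
Qed.

Section Lift.
Variables (A : instance V ar) (S : {set U}).

(* Composing a map into adom(B[S]) with the inclusion adom(B[S]) ⊆ adom(B). *)
Definition lift (g : adom_map A (induced S)) : adom_map A B :=
  [ffun x => SeqSub (proj1 (andP (adom_induced (ssvalP (g x)))))].

Lemma lift_val g x : val (lift g x) = val (g x).
Proof. by rewrite ffunE. Qed.

Lemma lift_inj : injective lift.
Proof. by move=> g1 g2 E; apply/ffunP => x; apply: val_inj; rewrite -!lift_val E. Qed.

Lemma ext_lift g : ext_map (lift g) =1 ext_map g.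
Proof. by move=> x; rewrite /ext_map; case: insub => //= y; rewrite lift_val. Qed.

Lemma img_lift g : img (lift g) \subset S.
Proof.
apply/subsetP => u; rewrite inE => /existsP [x /eqP <-].
by rewrite -inS_val lift_val; case/andP: (adom_induced (ssvalP (g x))).
Qed.

Lemma hom_lift g : is_hom (lift g) = is_hom g.
Proof.
apply: eq_forallb => R; apply: eq_in_all => t tA.
have -> : map_tuple (ext_map g) t = map_tuple (ext_map (lift g)) t.
  by apply: val_inj; rewrite /= (eq_map (ext_lift g)).
by rewrite /induced mem_filter all_inS ?img_lift.
Qed.

Lemma lift_onto h : is_hom h -> img h \subset S ->
  exists2 g : adom_map A (induced S), is_hom g & h = lift g.
Proof.
move=> hom_h sub.
have into_induced x : val (h x) \in adom (induced S).
  have /mem_adom [R [t tA xt]] := ssvalP x.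
  have tB : map_tuple (ext_map h) t \in B R by move/forallP: hom_h => /(_ R) /allP; apply.
  apply/mem_adom; exists R; exists (map_tuple (ext_map h) t).
    by rewrite /induced mem_filter tB all_inS.
  by rewrite -ext_map_in; apply: map_f.
have h_lift : h = lift [ffun x => SeqSub (into_induced x)].
  by apply/ffunP => x; apply: val_inj; rewrite lift_val ffunE.
by exists [ffun x => SeqSub (into_induced x)]; rewrite // -hom_lift -h_lift.
Qed.

Lemma hom_count_induced : hom_count A (induced S) = homs_into A S.
Proof.
rewrite /hom_count /homs_into -(card_imset _ lift_inj).
apply: eq_card => h; rewrite inE; apply/imsetP/idP.
  by move=> [g]; rewrite inE /= => hom_g ->; rewrite hom_lift hom_g img_lift.
by case/andP=> /lift_onto factor /factor [g hom_g ->]; exists g; rewrite ?inE.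
Qed.

End Lift.
End Induced.
End Instances.

Theorem mainTheorem12 (V : choiceType) (sig : finType) (ar : sig -> nat)
  (F F' : instance V ar) :
  ~ exists_surj_hom F F' ->
  exists H : instance V ar, subinstance H F' /\ hom_count F H <> hom_count F' H.
Proof.
move=> no_surj.
case: (boolP [exists S : {set seq_sub (adom F')}, homs_into F S != homs_into F' S]).
  move=> /existsP [S /eqP into_neq]; exists (induced S); split; first exact: induced_sub.
  by rewrite !hom_count_induced.
rewrite negb_exists => /forallP /(_ _) /negPn /eqP into_eq.
have onto_eq : homs_onto F =1 homs_onto (B := F') F'.
  by apply: subset_sums_inj => S; rewrite -!homs_into_sum.
have : 0 < homs_onto F' [set: seq_sub (adom F')].
  by apply/card_gt0P; exists (id_map F'); rewrite inE id_map_hom img_full id_map_surj.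
rewrite -onto_eq => /card_gt0P [h]; rewrite inE img_full => hom_surj_h.
by case: no_surj; exists h.
Qed.
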